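(* Let $R=\mathbb{F}_q+v\mathbb{F}_q+v^2\mathbb{F}_q$ with $v^3=v$, and let $M$ be an $n\times n$ circulant matrix over $R$. Then $G=(I_n\mid M)$ generates an isodual code, and hence a formally self-dual code, over $R$ (of length $2n$).
   Context: $q$ is a prime power and $R=\mathbb{F}_q[v]/\langle v^3-v\rangle$. A circulant matrix is one in which each row is the cyclic shift one position to the right of the previous row. A linear code of length $N$ over $R$ is an $R$-submodule of $R^N$; $C^\perp=\{x\in R^N:\sum x_iy_i=0\ \forall y\in C\}$. Two codes are equivalent if one is obtained from the other by a permutation of coordinates combined with multiplication of coordinates by units of $R$. $C$ is isodual if $C$ is equivalent to $C^\perp$. For $c\in R^N$ written uniquely as $a_0+va_1+v^2a_2$ with $a_i\in\mathbb{F}_q^N$, the Gray map is $\Psi(c)=(a_0,a_0+a_2,a_1)$ and the Lee weight $w_L(c)$ is the Hamming weight of $\Psi(c)$. $C$ is formally self-dual if $C$ and $C^\perp$ have the same Lee weight enumerator $\sum_c X^{3N-w_L(c)}Y^{w_L(c)}$. *)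

From HB Require Import structures.
From mathcomp Require Import all_boot all_order fingroup perm.
From mathcomp Require Import all_algebra.
Set Implicit Arguments. Unset Strict Implicit. Unset Printing Implicit Defensive.
Import GRing.Theory.
Local Open Scope ring_scope.

(* R = F[v]/<v^3 - v>, for a finite field F = F_q (q an arbitrary prime power). *)
Definition Rv (F : finFieldType) := {poly %/ ('X^3 - 'X : {poly F})}.

Section Codes.
Variable F : finFieldType.
Local Notation R := (Rv F).

Definition vR : R := 'qX.

Definition unitR (u : R) : Prop := exists w : R, u * w = 1.

Definition linear_code (N : nat) (C : {set 'rV[R]_N}) : Prop :=
  0 \in C /\ (forall (a : R) (x y : 'rV[R]_N), x \in C -> y \in C -> a *: x + y \in C).

Definition dual (N : nat) (C : {set 'rV[R]_N}) : {set 'rV[R]_N} :=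
  [set x : 'rV[R]_N | [forall y in C, \sum_(i < N) x ord0 i * y ord0 i == 0]].

Definition equiv_codes (N : nat) (C1 C2 : {set 'rV[R]_N}) : Prop :=
  exists (s : 'S_N) (u : 'I_N -> R), (forall i, unitR (u i)) /\
    C2 = [set (\row_j (u j * x ord0 (s j))) | x : 'rV[R]_N in C1].

Definition isodual (N : nat) (C : {set 'rV[R]_N}) : Prop := equiv_codes C (dual C).

(* components of r = a0 + v a1 + v^2 a2 (coefficients of the reduced representative) *)
Definition comp (r : R) (k : nat) : F := (r : {poly F})`_k.

(* Lee weight = Hamming weight of Gray image (a0, a0 + a2, a1) *)
Definition leeR (r : R) : nat :=
  (nat_of_bool (comp r 0 != 0)%R + nat_of_bool (comp r 0 + comp r 2 != 0)%R
   + nat_of_bool (comp r 1 != 0)%R)%N.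

Definition lee (N : nat) (x : 'rV[R]_N) : nat := (\sum_(i < N) leeR (x ord0 i))%N.

(* Lee weight enumerator sum_c X^(3N - wL c) Y^(wL c), as a bivariate integer
   polynomial in {poly {poly int}}: X is the inner variable ('X%:P), Y the outer ('X). *)
Definition lee_enum (N : nat) (C : {set 'rV[R]_N}) : {poly {poly int}} :=
  \sum_(c in C) ((('X : {poly int}) ^+ (3 * N - lee c)%N)%:P * 'X ^+ lee c).

Definition formally_self_dual (N : nat) (C : {set 'rV[R]_N}) : Prop :=
  lee_enum C = lee_enum (dual C).

Definition gen_code (k N : nat) (G : 'M[R]_(k, N)) : {set 'rV[R]_N} :=
  [set (x *m G) | x : 'rV[R]_k].

(* each row is the cyclic right shift of the previous one (indices mod n) *)
Definition circulant (n : nat) (M : 'M[R]_n) : Prop :=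
  forall i j : 'I_n, M (ordS i) (ordS j) = M i j.
End Codes.

(** The code C generated by (I | M) consists of the words (x, xM), and its
   dual consists of the words (-y M^T, y).  For a circulant M the transpose is
   M^T = J M J, where J is the permutation matrix of the reflection i ↦ -i
   (mod n) and J^2 = 1.  Hence the map (x, z) ↦ (-z J, x J), a coordinate
   permutation combined with the unit signs ±1, sends (x, xM) to (-y M^T, y)
   for y = x J, so it maps C onto its dual.  A sign change does not alter the
   Lee weight, so this equivalence also preserves Lee weight enumerators. *)
From Pilot Require Import Defs.
From HB Require Import structures.
From mathcomp Require Import all_boot all_order fingroup perm.
From mathcomp Require Import all_algebra.
Set Implicit Arguments. Unset Strict Implicit. Unset Printing Implicit Defensive.
Import GRing.Theory.

Section OrdOpp.
Variable n : nat.

Definition ord_opp (i : 'I_n) : 'I_n :=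
  Ordinal (ltn_pmod (n - i) (leq_trans (ltn0Sn i) (ltn_ord i))).

Lemma ord_oppK : involutive ord_opp.
Proof.
move=> i; apply: val_inj => /=.
have n_gt0 : 0 < n by apply: leq_trans (ltn0Sn i) (ltn_ord i).
have [->|i_gt0] := posnP i; first by rewrite subn0 modnn subn0 modnn.
rewrite (@modn_small (n - i)); last by rewrite ltn_subrL i_gt0 n_gt0.
by rewrite subKn ?(ltnW (ltn_ord i)) // modn_small.
Qed.

Lemma val_iter_ordS k (i : 'I_n) : val (iter k (@ordS n) i) = (i + k) %% n.
Proof.
elim: k => [|k IHk]; first by rewrite addn0 modn_small.
by rewrite iterS /= IHk addnS -addn1 modnDml addn1.
Qed.

Definition opp_perm : 'S_n := perm (can_inj ord_oppK).

Lemma opp_permE i : opp_perm i = ord_opp i.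
Proof. by rewrite permE. Qed.

Lemma opp_perm_sqr : (opp_perm * opp_perm)%g = 1%g.
Proof. by apply/permP => i; rewrite permM !opp_permE ord_oppK perm1. Qed.

Lemma opp_permV : (opp_perm^-1)%g = opp_perm.
Proof. by apply/(mulgI opp_perm); rewrite mulgV opp_perm_sqr. Qed.

End OrdOpp.

Section ShiftInvariant.
Variables (T : Type) (n : nat) (M : 'I_n -> 'I_n -> T).
Hypothesis M_shift : forall i j, M (ordS i) (ordS j) = M i j.

Lemma shift_invariant_iter k i j : M (iter k (@ordS n) i) (iter k (@ordS n) j) = M i j.
Proof. by elim: k i j => [//|k IHk] i j; rewrite !iterS M_shift IHk. Qed.

(* Shifting (-i, -j) by i + j gives (j, i). *)
Lemma shift_invariant_swap i j : M j i = M (ord_opp i) (ord_opp j).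
Proof.
rewrite -(shift_invariant_iter (i + j) (ord_opp i)); congr M; apply: val_inj;
  rewrite val_iter_ordS /= modnDml.
  by rewrite addnA subnK ?(ltnW (ltn_ord _)) // modnDl modn_small.
by rewrite [(i + j)%N]addnC addnA subnK ?(ltnW (ltn_ord _)) // modnDl modn_small.
Qed.

End ShiftInvariant.

Local Open Scope ring_scope.

Section Twist.
Variables (R : comNzRingType) (n : nat).
Local Notation J := (perm_mx (opp_perm n) : 'M[R]_n).

Lemma mulmx_opp_perm m (x : 'M[R]_(m, n)) : x *m J = col_perm (opp_perm n) x.
Proof. by rewrite col_permE opp_permV. Qed.

Lemma opp_perm_mx_sqr : J *m J = 1%:M.
Proof. by rewrite -perm_mxM opp_perm_sqr perm_mx1. Qed.

Lemma trmx_shift_invariant (M : 'M[R]_n) :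
  (forall i j, M (ordS i) (ordS j) = M i j) -> M^T = J *m M *m J.
Proof.
move=> M_shift; apply/matrixP => i j.
rewrite mulmx_opp_perm -row_permE !mxE !opp_permE.
exact: (@shift_invariant_swap _ _ (fun a b => M a b) M_shift i j).
Qed.

Definition swap_opp (j : 'I_(n + n)) : 'I_(n + n) :=
  match split j with inl i => rshift n (ord_opp i) | inr i => lshift n (ord_opp i) end.

Lemma swap_opp_lshift k : swap_opp (lshift n k) = rshift n (ord_opp k).
Proof. by rewrite /swap_opp (unsplitK (inl k)). Qed.

Lemma swap_opp_rshift k : swap_opp (rshift n k) = lshift n (ord_opp k).
Proof. by rewrite /swap_opp (unsplitK (inr k)). Qed.

Lemma swap_oppK : involutive swap_opp.
Proof.
move=> j; case: (split_ordP j) => k ->;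
  by rewrite ?swap_opp_lshift ?swap_opp_rshift ?swap_opp_lshift ?swap_opp_rshift ord_oppK.
Qed.

Definition swap_opp_perm : 'S_(n + n) := perm (can_inj swap_oppK).

Lemma swap_opp_permE j : swap_opp_perm j = swap_opp j.
Proof. by rewrite permE. Qed.

Definition left_sign (j : 'I_(n + n)) : R := if (j < n)%N then -1 else 1.

Lemma left_sign_lshift k : left_sign (lshift n k) = -1.
Proof. by rewrite /left_sign /= ltn_ord. Qed.

Lemma left_sign_rshift k : left_sign (rshift n k) = 1.
Proof. by rewrite /left_sign /= ltnNge leq_addr. Qed.

Lemma left_sign_sqr j : left_sign j * left_sign j = 1.
Proof. by rewrite /left_sign; case: ifP; rewrite ?mulrNN mulr1. Qed.

Definition twist (x : 'rV[R]_(n + n)) : 'rV[R]_(n + n) :=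
  \row_j (left_sign j * x ord0 (swap_opp_perm j)).

Lemma twist_row_mx (x z : 'rV[R]_n) :
  twist (row_mx x z) = row_mx (- (z *m J)) (x *m J).
Proof.
apply/rowP => j; rewrite !mxE swap_opp_permE; case: (split_ordP j) => k ->.
  rewrite swap_opp_lshift left_sign_lshift (unsplitK (inr _)) mulmx_opp_perm.
  by rewrite !mxE opp_permE mulN1r.
rewrite swap_opp_rshift left_sign_rshift (unsplitK (inl _)) mulmx_opp_perm.
by rewrite !mxE opp_permE mul1r.
Qed.

Lemma twist_inj : injective twist.
Proof.
move=> x y /rowP eq_xy; apply/rowP => k.
have := eq_xy (swap_opp_perm k); rewrite !mxE !swap_opp_permE swap_oppK => e.
by rewrite -[x _ _]mul1r -(left_sign_sqr (swap_opp k)) -mulrA e mulrA left_sign_sqr mul1r.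
Qed.

End Twist.

Arguments twist {R n}.

Lemma row_mulmx_tr_eq0 (R : comNzRingType) m (w : 'rV[R]_m) :
  (forall x : 'rV[R]_m, (w *m x^T) ord0 ord0 = 0) -> w = 0.
Proof.
move=> w_orth; apply/rowP => i.
by have := w_orth (delta_mx 0 i); rewrite trmx_delta -colE !mxE.
Qed.

Section Codes.
Variable F : finFieldType.
Local Notation R := (Rv F).

Lemma dot_mulmx_tr N (a b : 'rV[R]_N) :
  \sum_(i < N) a ord0 i * b ord0 i = (a *m b^T) ord0 ord0.
Proof. by rewrite mxE; apply: eq_bigr => i _; rewrite mxE. Qed.

Lemma linear_gen_code k N (G : 'M[R]_(k, N)) : linear_code (gen_code G).
Proof.
split; first by apply/imsetP; exists 0; rewrite ?mul0mx.
move=> a _ _ /imsetP[x _ ->] /imsetP[y _ ->]; apply/imsetP.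
by exists (a *: x + y) => //; rewrite mulmxDl scalemxAl.
Qed.

Lemma dual_gen_code_systematic k m (A : 'M[R]_(k, m)) :
  dual (gen_code (row_mx 1%:M A)) = [set row_mx (- (b *m A^T)) b | b : 'rV[R]_m].
Proof.
have dotE (x : 'rV_k) (a : 'rV_k) (b : 'rV_m) :
    \sum_(i < k + m) row_mx a b ord0 i * (x *m row_mx 1%:M A) ord0 i =
    ((a + b *m A^T) *m x^T) ord0 ord0.
  rewrite dot_mulmx_tr trmx_mul tr_row_mx trmx1 mulmxA mul_row_col mulmx1.
  by rewrite mulmxDl.
apply/setP => y; rewrite -(hsubmxK y) in_set; apply/forall_inP/imsetP.
- move=> y_orth; exists (rsubmx y) => //; congr row_mx.
  apply/eqP; rewrite -addr_eq0; apply/eqP/row_mulmx_tr_eq0 => x.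
  by rewrite -dotE; apply/eqP/y_orth/imsetP; exists x.
- move=> [b _ /eq_row_mx[-> ->]] _ /imsetP[x _ ->].
  by rewrite dotE addNr mul0mx mxE.
Qed.

Lemma dual_gen_code_circulant n (M : 'M[R]_n) : circulant M ->
  dual (gen_code (row_mx 1%:M M)) = @twist R n @: gen_code (row_mx 1%:M M).
Proof.
move=> M_circ; rewrite dual_gen_code_systematic.
pose J : 'M[R]_n := perm_mx (opp_perm n).
have J2 : J *m J = 1%:M := opp_perm_mx_sqr R n.
have twist_word x : twist (x *m row_mx 1%:M M) = row_mx (- ((x *m J) *m M^T)) (x *m J).
  rewrite mul_mx_row mulmx1 twist_row_mx (trmx_shift_invariant M_circ) !mulmxA.
  by rewrite -[x *m _ *m _]mulmxA J2 mulmx1.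
apply/setP => y; apply/imsetP/imsetP => [[b _ ->]|[_ /imsetP[x _ ->] ->]].
- exists (b *m J *m row_mx 1%:M M); first by apply/imsetP; exists (b *m J).
  by rewrite twist_word -[b *m J *m J]mulmxA J2 mulmx1.
- by exists (x *m J); rewrite ?twist_word.
Qed.

Lemma comp_opp (r : R) k : Defs.comp (- r) k = - Defs.comp r k.
Proof. by rewrite /Defs.comp -coefN. Qed.

Lemma leeR_opp (r : R) : leeR (- r) = leeR r.
Proof. by rewrite /leeR !comp_opp -opprD !oppr_eq0. Qed.

Lemma lee_twist n (x : 'rV[R]_(n + n)) : lee (twist x) = lee x.
Proof.
rewrite /lee [RHS](reindex_inj (@perm_inj _ (swap_opp_perm n))).
apply: eq_bigr => j _; rewrite mxE /left_sign.
by case: ifP => _; rewrite ?mulN1r ?mul1r ?leeR_opp.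
Qed.

Lemma lee_enum_imset N (f : 'rV[R]_N -> 'rV[R]_N) (C : {set 'rV[R]_N}) :
  injective f -> (forall x, lee (f x) = lee x) -> lee_enum (f @: C) = lee_enum C.
Proof.
move=> f_inj lee_f; rewrite /lee_enum big_imset /=; last by move=> x y _ _ /f_inj.
by apply: eq_bigr => c _; rewrite lee_f.
Qed.

End Codes.

Theorem theorem15 (F : finFieldType) (n : nat) (M : 'M[Rv F]_n) :
  circulant M ->
  let C := gen_code (row_mx (1%:M : 'M[Rv F]_n) M) in
  linear_code C /\ isodual C /\ formally_self_dual C.
Proof.
move=> M_circ C; split; last split.
- exact: linear_gen_code.
- exists (swap_opp_perm n), (@left_sign (Rv F) n); split.
    by move=> j; exists (left_sign _ j); rewrite left_sign_sqr.
  exact: dual_gen_code_circulant.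
- rewrite /formally_self_dual dual_gen_code_circulant // lee_enum_imset //.
    exact: twist_inj.
  exact: lee_twist.
Qed.
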